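(* Let $P$ be a locally finite poset, $R$ a commutative unital ring, and $n\ge 3$. Let $\mathbf{x}=(x_1,\mathbf{u})$ and $\mathbf{y}=(\mathbf{v},y_n)$ be elements of $P^n_\le$, where $x_1,y_n\in P$ and $\mathbf{u},\mathbf{v}\in P^{n-1}_\le$. Then in $I^n(P,R)$, $$e_{\mathbf{x}}e_{\mathbf{y}}=\begin{cases}\sum_{\mathbf{z}\in\mathcal{I}(\mathbf{u})} e_{(x_1,\mathbf{z},y_n)}, & \mathbf{u}=\mathbf{v},\\ 0,& \mathbf{u}\ne\mathbf{v}.\end{cases}$$
   Context: For a poset $P$ and $n\ge 2$, $P^n_\le=\{(x_1,\dots,x_n)\in P^n: x_1\le\dots\le x_n\}$. For $\mathbf{x}=(x_1,\dots,x_n)\in P^n_\le$, $\mathcal{I}(\mathbf{x})=[x_1,x_2]\times\dots\times[x_{n-1},x_n]\subseteq P^{n-1}_\le$, where $[a,b]=\{c\in P: a\le c\le b\}$. The $n$-th partial flag incidence algebra $I^n(P,R)$ is the $R$-module of functions $f:P^n_\le\to R$ with multiplication $(fg)(\mathbf{x})=\sum_{\mathbf{y}\in\mathcal{I}(\mathbf{x})}f(x_1,\mathbf{y})g(\mathbf{y},x_n)$. For $\mathbf{x}\in P^n_\le$, $e_{\mathbf{x}}\in I^n(P,R)$ is the function equal to $1$ at $\mathbf{x}$ and $0$ elsewhere. *)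

From HB Require Import structures.
From mathcomp Require Import all_boot all_order all_algebra.
From mathcomp Require Import boolp classical_sets cardinality fsbigop.
Set Implicit Arguments. Unset Strict Implicit. Unset Printing Implicit Defensive.
Import Order.TTheory GRing.Theory.
Local Open Scope classical_set_scope.
Local Open Scope ring_scope.

Section PFIA.
Context {disp : Order.disp_t} {P : porderType disp} {R : comNzRingType}.

Definition locally_finite : Prop :=
  forall a b : P, finite_set [set c : P | (a <= c)%O /\ (c <= b)%O].

(* Elements of P^n_<= are represented by sequences of length n that are
   (consecutively) sorted for <=. *)
Definition chain (n : nat) (s : seq P) : bool :=
  (size s == n) && sorted (fun a b : P => (a <= b)%O) s.

(* I(x) = [x_1,x_2] x ... x [x_{n-1},x_n] *)
Definition Icube (x : seq P) : set (seq P) :=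
  [set y : seq P | size y = (size x).-1 /\
     all (fun t : P * P => (t.1 <= t.2)%O) (zip x y) /\
     all (fun t : P * P => (t.1 <= t.2)%O) (zip y (behead x))].

(* Elements of I^n(P,R): functions seq P -> R, only their values on P^n_<=
   are relevant. *)
Definition pfmul (f g : seq P -> R) (x : seq P) : R :=
  match x with
  | [::] => 0
  | x1 :: x' => \sum_(y \in Icube x) f (x1 :: y) * g (rcons y (last x1 x'))
  end.

Definition ebasis (x : seq P) : seq P -> R := fun w => if w == x then 1 else 0.

End PFIA.

(* Evaluate both sides at w = (w1, m, wn). In the product only the summand
   z = u survives, and it is nonzero iff w1 = x1, u = v, wn = yn and
   u lies in I(w); on the right only z = m survives, and it is nonzero iff
   w1 = x1, wn = yn and m lies in I(u). The two interval conditions agree,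
   since both say x1 <= u_1 <= m_1 <= u_2 <= ... <= m_k <= u_(k+1) <= yn.
   Each sum has at most one nonzero term. *)

From mathcomp Require Import all_boot all_order all_algebra.
From mathcomp Require Import boolp classical_sets fsbigop.
Import Order.TTheory GRing.Theory.
Local Open Scope classical_set_scope.
Local Open Scope ring_scope.

Lemma fsbig_supp1 (R : Type) (idx : R) (op : Monoid.com_law idx)
    (T : choiceType) (A : set T) (F : T -> R) (a : T) :
  (forall z, A z -> z <> a -> F z = idx) ->
  \big[op/idx]_(z \in A) F z = if `[< A a >] then F a else idx.
Proof.
move=> Fa0; case: asboolP => [Aa | nAa].
  rewrite -(fsbig_widen [set a] A F) ?fsbig_set1 //; first by move=> z ->.
  by move=> z [Az /= za]; apply: Fa0.
by apply: fsbig1 => z Az; apply: Fa0 => // za; apply: nAa; rewrite -za.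
Qed.
Arguments fsbig_supp1 {R idx op T A F} a.

Lemma path_le_head (T : Type) (e : rel T) (x : T) (s : seq T) :
  reflexive e -> path e x s -> e x (head x s).
Proof. by move=> e_refl; case: s => [|y s] /= => [_|/andP[]//]; apply: e_refl. Qed.
Arguments path_le_head {T e x s}.

Lemma sorted_rcons_le_last (T : Type) (e : rel T) (x : T) (s : seq T) :
  reflexive e -> sorted e (rcons s x) -> e (last x s) x.
Proof.
move=> e_refl; case: s => [|y s] /=; first by move=> _; apply: e_refl.
by rewrite rcons_path => /andP[].
Qed.
Arguments sorted_rcons_le_last {T e x s}.

Lemma zip_rconsl (S T : Type) (s : seq S) (t : seq T) (x : S) :
  size s = size t -> zip (rcons s x) t = zip s t.
Proof. by move=> e; rewrite -cats1 -[t in LHS]cats0 zip_cat // cats0. Qed.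

Section IntervalCubes.
Context {disp : Order.disp_t} {P : porderType disp} {R : comNzRingType}.

Lemma Icube_cons_rcons (x1 yn : P) (m u : seq P) :
  size u = (size m).+1 -> (x1 <= head x1 u)%O -> (last yn u <= yn)%O ->
  Icube (x1 :: rcons m yn) u <-> Icube u m.
Proof.
move=> size_u x1_le_u u_le_yn; rewrite /Icube /= size_rcons size_u /=.
set le2 := fun t : P * P => (t.1 <= t.2)%O.
have -> : all le2 (zip (x1 :: rcons m yn) u) = all le2 (zip m (behead u)).
  case: u size_u x1_le_u {u_le_yn} => [//|u1 u'] /= [size_u'] x1_le_u1.
  by rewrite -[le2 (x1, u1)]/(x1 <= u1)%O x1_le_u1 zip_rconsl ?size_u'.
have -> : all le2 (zip u (rcons m yn)) = all le2 (zip u m).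
  case/lastP: u size_u u_le_yn {x1_le_u} => [//|u' ul].
  rewrite size_rcons last_rcons => -[size_u'] ul_le_yn.
  by rewrite zip_rcons // all_rcons -[le2 (ul, yn)]/(ul <= yn)%O ul_le_yn /= zip_rconsl.
by split=> -[_ [? ?]].
Qed.

Lemma pfmul_ebasis (x1 yn w1 wn : P) (u v m : seq P) :
  pfmul (ebasis (R := R) (x1 :: u)) (ebasis (rcons v yn)) (w1 :: rcons m wn) =
  if [&& u == v, w1 == x1, wn == yn & `[< Icube (w1 :: rcons m wn) u >]]
  then 1 else 0.
Proof.
rewrite /pfmul last_rcons (fsbig_supp1 u) => [|y _ yu]; last first.
  by rewrite /ebasis ifN ?mul0r //; apply/eqP => -[].
rewrite /ebasis eqseq_cons eqseq_rcons eqxx andbT.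
by case: (w1 == x1); case: (u == v); case: (wn == yn); case: asboolP;
  rewrite ?mulr1 ?mulr0 ?mul0r.
Qed.

Lemma fsum_ebasis_cons_rcons (x1 yn w1 wn : P) (u m : seq P) :
  \sum_(z \in Icube u) ebasis (R := R) (x1 :: rcons z yn) (w1 :: rcons m wn) =
  if [&& w1 == x1, wn == yn & `[< Icube u m >]] then 1 else 0.
Proof.
rewrite (fsbig_supp1 m) => [|z _ zm]; last first.
  by rewrite /ebasis ifN //; apply/eqP => -[_ /rcons_inj[/esym]].
rewrite /ebasis eqseq_cons eqseq_rcons eqxx.
by case: (w1 == x1); case: (wn == yn); case: asboolP.
Qed.

End IntervalCubes.

Theorem proposition1p2 (disp : Order.disp_t) (P : porderType disp)
  (R : comNzRingType) (n : nat) (x1 yn : P) (u v : seq P) :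
  locally_finite (P := P) -> (3 <= n)%N ->
  chain n (x1 :: u) -> chain n (rcons v yn) ->
  forall w : seq P, chain n w ->
  pfmul (ebasis (R := R) (x1 :: u)) (ebasis (rcons v yn)) w =
    (if u == v then \sum_(z \in Icube u) ebasis (R := R) (x1 :: rcons z yn) w
     else 0).
Proof.
move=> _ n3 /andP[/eqP su sorted_u] /andP[_ sorted_v] w /andP[/eqP sw _].
case: w sw => [|w1 w'] sw; first by rewrite -sw in n3.
case/lastP: w' sw => [|m wn] sw; first by rewrite -sw in n3.
rewrite pfmul_ebasis fsum_ebasis_cons_rcons.
case: (eqVneq u v) sorted_v => [<- sorted_v | //].
case: (eqVneq w1 x1) => [-> | _] //=; case: (eqVneq wn yn) => [-> | _] //=.
have size_u : size u = (size m).+1.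
  by move: su; rewrite -sw /= size_rcons => -[].
have x1_le_u := path_le_head le_refl sorted_u.
have u_le_yn := sorted_rcons_le_last le_refl sorted_v.
by rewrite (asbool_equiv_eq (Icube_cons_rcons x1 yn m u size_u x1_le_u u_le_yn)).
Qed.
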